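(* Let $A\subset\mathbb A$ be an essential thin annular continuum and let $S$ be a spike of $A$ with $h(S)<\infty$. Then $\overline S\cap C_{\hat A}\neq\emptyset$.
   Context: $\mathbb A=\mathbb S^1\times\mathbb R$, $\pi:\mathbb R^2\to\mathbb A$. An essential annular continuum $A$ is a continuum with $\mathbb A\setminus A$ exactly two components $\mathcal U^+(A),\mathcal U^-(A)$, unbounded above resp. below; thin means empty interior; $C_A=\overline{\mathcal U^+(A)}\cap\overline{\mathcal U^-(A)}$; $\hat A=\pi^{-1}(A)$, $C_{\hat A}=\pi^{-1}(C_A)$. For $X\subset\mathbb R^2$, $h(X)=\sup\{x_1-x_2:(x_1,y_1),(x_2,y_2)\in X\}$. Spikes of $A$ are the connected components of $\hat A\setminus C_{\hat A}$. *)

From Stdlib Require Import Reals List.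
Open Scope R_scope.

Definition pt := (R * R)%type.
Definition pset := pt -> Prop.

(* deck transformation generating the covering pi : R^2 -> A *)
Definition T1 (p : pt) : pt := (fst p + 1, snd p).

(* subsets of the annulus are represented by their lifts: T1-invariant subsets of R^2 *)
Definition invariant (X : pset) : Prop := forall p, X p <-> X (T1 p).

Definition near (e : R) (p q : pt) : Prop :=
  Rabs (fst p - fst q) < e /\ Rabs (snd p - snd q) < e.

Definition open2 (U : pset) : Prop :=
  forall p, U p -> exists e, 0 < e /\ forall q, near e p q -> U q.

(* closure in R^2 (for invariant sets it is the lift of the closure in A) *)
Definition closure2 (X : pset) : pset :=
  fun p => forall e, 0 < e -> exists q, X q /\ near e p q.

(* open sets of the annulus = lifts of open sets = invariant open sets of R^2 *)
Definition openA (U : pset) : Prop := invariant U /\ open2 U.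

Definition connected_wrt (op : pset -> Prop) (X : pset) : Prop :=
  ~ exists U V, op U /\ op V /\
      (forall p, X p -> U p \/ V p) /\
      (exists p, X p /\ U p) /\ (exists p, X p /\ V p) /\
      (forall p, X p -> U p -> V p -> False).

Definition component_wrt (op : pset -> Prop) (C Y : pset) : Prop :=
  (exists p, C p) /\ (forall p, C p -> Y p) /\ connected_wrt op C /\
  forall D : pset, (forall p, C p -> D p) -> (forall p, D p -> Y p) ->
    connected_wrt op D -> forall p, D p -> C p.

Definition connectedA := connected_wrt openA.
Definition componentA (C Y : pset) : Prop := invariant C /\ component_wrt openA C Y.

Definition compactA (X : pset) : Prop :=
  forall (I : Type) (U : I -> pset), (forall i, openA (U i)) ->
    (forall p, X p -> exists i, U i p) ->
    exists l : list I, forall p, X p -> exists i, In i l /\ U i p.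

Definition continuumA (X : pset) : Prop :=
  invariant X /\ (exists p, X p) /\ compactA X /\ connectedA X.

Definition complement (X : pset) : pset := fun p => ~ X p.

Definition unbounded_above (X : pset) : Prop := forall M, exists p, X p /\ M < snd p.
Definition unbounded_below (X : pset) : Prop := forall M, exists p, X p /\ snd p < M.

Definition essential_annular (A Up Um : pset) : Prop :=
  continuumA A /\
  componentA Up (complement A) /\ componentA Um (complement A) /\
  (exists p, Up p /\ ~ Um p) /\
  (forall C, componentA C (complement A) -> (forall p, C p <-> Up p) \/ (forall p, C p <-> Um p)) /\
  unbounded_above Up /\ unbounded_below Um.

Definition thin (A : pset) : Prop :=
  forall U, openA U -> (forall p, U p -> A p) -> forall p, ~ U p.

(* C_{\hat A} = pi^{-1}(C_A) = closure(U^+ lift) /\ closure(U^- lift) *)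
Definition CAhat (Up Um : pset) : pset := fun p => closure2 Up p /\ closure2 Um p.

Definition spike (A Up Um S : pset) : Prop :=
  component_wrt open2 S (fun p => A p /\ ~ CAhat Up Um p).

Definition h_finite (S : pset) : Prop :=
  exists M, forall p q, S p -> S q -> fst p - fst q <= M.

From Stdlib Require Import Reals List Lra Lia ZArith Classical.
Open Scope R_scope.

(* Suppose the closure of the spike S misses C_{\hat A}.  Then S is closed, and
   since A is thin every point of A lies in the closure of U^+ or of U^-.  We
   show that S must meet both closures; as these two closed sets do not meet on
   S, this disconnects S.

   S meets the closure of W = U^+ (or U^-): otherwise S is a horizontally
   bounded component of A minus the closed invariant set Z = closure W, and Z
   meets A.  By compactness S has an eps-neighbourhood N away from Z, and the
   Shura-Bura lemma (a component of a compact set is the intersection of its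
   relatively clopen neighbourhoods) yields a relatively clopen, horizontally
   bounded piece of A around S inside N.  Its integer translates then form a
   nonempty clopen proper part of the connected set A, a contradiction. *)

Lemma near_iff e p q :
  near e p q <->
  (fst q - fst p < e /\ fst p - fst q < e /\ snd q - snd p < e /\ snd p - snd q < e).
Proof.
  unfold near; split.
  - intros [H1 H2]. apply Rabs_def2 in H1. apply Rabs_def2 in H2. lra.
  - intros H. split; apply Rabs_def1; lra.
Qed.

Ltac unfold_near := repeat match goal with H : near _ _ _ |- _ => apply near_iff in H end.
Ltac near_lra := unfold_near; try (apply near_iff); simpl in *; lra.

Lemma near_refl e p : 0 < e -> near e p p.
Proof. intros; near_lra. Qed.

Lemma near_sym e p q : near e p q -> near e q p.
Proof. intros; near_lra. Qed.

Lemma near_trans e1 e2 p q r : near e1 p q -> near e2 q r -> near (e1 + e2) p r.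
Proof. intros; near_lra. Qed.

Lemma near_mono e1 e2 p q : e1 <= e2 -> near e1 p q -> near e2 p q.
Proof. intros; near_lra. Qed.

Definition closed2 (X : pset) : Prop := forall p, closure2 X p -> X p.

Definition compact2 (X : pset) : Prop :=
  forall (I : Type) (U : I -> pset), (forall i, open2 (U i)) ->
    (forall p, X p -> exists i, U i p) ->
    exists l : list I, forall p, X p -> exists i, In i l /\ U i p.

Lemma closure_incl X p : X p -> closure2 X p.
Proof. intros H e He. exists p. split; auto. apply near_refl; auto. Qed.

Lemma closure_mono (X Y : pset) p : (forall q, X q -> Y q) -> closure2 X p -> closure2 Y p.
Proof. intros H Hc e He. destruct (Hc e He) as [q [Xq Nq]]. exists q; auto. Qed.

Lemma closure_closed X : closed2 (closure2 X).
Proof.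
  intros p Hp e He. destruct (Hp (e/2)) as [q [Hq Nq]]; [lra|].
  destruct (Hq (e/2)) as [r [Hr Nr]]; [lra|]. exists r. split; auto.
  replace e with (e/2 + e/2) by field. eapply near_trans; eauto.
Qed.

Lemma not_in_closure X p : ~ closure2 X p -> exists e, 0 < e /\ forall q, near e p q -> ~ X q.
Proof.
  intros Hn. apply NNPP; intro H. apply Hn. intros e He. apply NNPP; intro H2.
  apply H. exists e. split; auto. intros q Hq Xq. apply H2. exists q; auto.
Qed.

Lemma closed_compl_open X : closed2 X -> open2 (fun p => ~ X p).
Proof.
  intros HX p Hp. assert (Hc : ~ closure2 X p) by auto.
  destruct (not_in_closure X p Hc) as [e [He H]]. exists e; split; auto.
Qed.

Lemma open_compl_closed U : open2 U -> closed2 (fun p => ~ U p).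
Proof.
  intros HU p Hp Up. destruct (HU p Up) as [e [He H]].
  destruct (Hp e He) as [q [Hq Nq]]. apply Hq, H, Nq.
Qed.

Lemma closed_and P Q : closed2 P -> closed2 Q -> closed2 (fun p => P p /\ Q p).
Proof.
  intros HP HQ p Hp. split; [apply HP|apply HQ].
  - apply (closure_mono (fun p => P p /\ Q p) P p); [tauto|exact Hp].
  - apply (closure_mono (fun p => P p /\ Q p) Q p); [tauto|exact Hp].
Qed.

Lemma closed_diff_open Q V : closed2 Q -> open2 V -> closed2 (fun p => Q p /\ ~ V p).
Proof. intros HQ HV. apply closed_and; auto. apply open_compl_closed; auto. Qed.

Lemma closed_singleton p : closed2 (fun x => x = p).
Proof.
  intros x Hx. destruct x as [x1 x2], p as [p1 p2].
  assert (H1 : forall e, 0 < e -> Rabs (x1 - p1) < e /\ Rabs (x2 - p2) < e).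
  { intros e He. destruct (Hx e He) as [q [-> Nq]]. exact Nq. }
  destruct (Req_dec x1 p1) as [E1|E1]; destruct (Req_dec x2 p2) as [E2|E2]; subst; auto; exfalso.
  - destruct (H1 (Rabs (x2 - p2))) as [_ H]; [apply Rabs_pos_lt; lra|lra].
  - destruct (H1 (Rabs (x1 - p1))) as [H _]; [apply Rabs_pos_lt; lra|lra].
  - destruct (H1 (Rabs (x1 - p1))) as [H _]; [apply Rabs_pos_lt; lra|lra].
Qed.

Lemma closed_fst_le P c : closed2 P -> closed2 (fun p => P p /\ fst p <= c).
Proof.
  intros HP. apply closed_and; auto. intros p Hp. apply Rnot_lt_le. intro H.
  destruct (Hp (fst p - c)) as [q [Hq Nq]]; [lra|]. near_lra.
Qed.

Lemma closed_fst_ge P c : closed2 P -> closed2 (fun p => P p /\ c <= fst p).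
Proof.
  intros HP. apply closed_and; auto. intros p Hp. apply Rnot_lt_le. intro H.
  destruct (Hp (c - fst p)) as [q [Hq Nq]]; [lra|]. near_lra.
Qed.

Lemma open_ball e c : open2 (near e c).
Proof.
  intros p Hp. apply near_iff in Hp.
  set (e' := Rmin (Rmin (e - (fst p - fst c)) (e - (fst c - fst p)))
                  (Rmin (e - (snd p - snd c)) (e - (snd c - snd p)))).
  assert (H1 : e' <= e - (fst p - fst c))
    by (unfold e'; eapply Rle_trans; [apply Rmin_l|apply Rmin_l]).
  assert (H2 : e' <= e - (fst c - fst p))
    by (unfold e'; eapply Rle_trans; [apply Rmin_l|apply Rmin_r]).
  assert (H3 : e' <= e - (snd p - snd c))
    by (unfold e'; eapply Rle_trans; [apply Rmin_r|apply Rmin_l]).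
  assert (H4 : e' <= e - (snd c - snd p))
    by (unfold e'; eapply Rle_trans; [apply Rmin_r|apply Rmin_r]).
  assert (H0 : 0 < e') by (unfold e'; repeat apply Rmin_glb_lt; lra).
  exists e'. split; auto. intros q Hq. near_lra.
Qed.

(* A ball guarded by a side condition; the index sets of the covers built from
   balls below carry such conditions. *)
Lemma open_guarded_ball (C : Prop) e c : open2 (fun p => C /\ near e c p).
Proof.
  intros p [HC Hp]. destruct (open_ball e c p Hp) as [e' [He' H]]. exists e'. split; auto.
Qed.

Lemma open_ex {I : Type} (F : I -> pset) :
  (forall i, open2 (F i)) -> open2 (fun p => exists i, F i p).
Proof.
  intros H p [i Hi]. destruct (H i p Hi) as [e [He H2]]. exists e. split; auto.
  intros q Hq. exists i. auto.
Qed.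

Lemma open_and U V : open2 U -> open2 V -> open2 (fun p => U p /\ V p).
Proof.
  intros HU HV p [Up Vp]. destruct (HU p Up) as [e1 [He1 H1]]. destruct (HV p Vp) as [e2 [He2 H2]].
  exists (Rmin e1 e2). split; [apply Rmin_glb_lt; auto|].
  intros q Hq. split; [apply H1|apply H2]; eapply near_mono; eauto; [apply Rmin_l|apply Rmin_r].
Qed.

Lemma open_or U V : open2 U -> open2 V -> open2 (fun p => U p \/ V p).
Proof.
  intros HU HV p [Up|Vp].
  - destruct (HU p Up) as [e [He H]]. exists e. split; auto.
  - destruct (HV p Vp) as [e [He H]]. exists e. split; auto.
Qed.

Lemma open_list_inter {I : Type} (F : I -> pset) (l : list I) :
  (forall i, open2 (F i)) -> open2 (fun p => forall i, In i l -> F i p).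
Proof.
  intros HF. induction l as [|a l IH].
  - intros p _. exists 1. split; [lra|]. intros q _ i [].
  - intros p Hp. destruct (HF a p (Hp a (or_introl eq_refl))) as [e1 [He1 H1]].
    destruct (IH p (fun i Hi => Hp i (or_intror Hi))) as [e2 [He2 H2]].
    exists (Rmin e1 e2). split; [apply Rmin_glb_lt; auto|].
    intros q Hq i [<-|Hi].
    + apply H1. eapply near_mono; [apply Rmin_l|eauto].
    + apply (H2 q); auto. eapply near_mono; [apply Rmin_r|eauto].
Qed.

(* The positive entries of a finite list of reals are bounded below by a
   positive number; this turns finite subcovers into uniform radii. *)
Lemma positive_list_min (l : list R) : exists d, 0 < d /\ forall x, In x l -> 0 < x -> d <= x.
Proof.
  induction l as [|a l [d [Hd H]]].
  - exists 1. split; [lra|]. intros x [].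
  - destruct (Rlt_dec 0 a).
    + exists (Rmin d a). split; [apply Rmin_glb_lt; auto|].
      intros x [<-|Hx] Hx0; [apply Rmin_r|]. eapply Rle_trans; [apply Rmin_l|auto].
    + exists d. split; auto. intros x [<-|Hx] Hx0; [lra|auto].
Qed.

(* Integer translates.  [shift j] is the j-th power of the deck transformation
   [T1]; [sat X] is the saturation of X, i.e. the lift of its image in A. *)
Definition shift (j : Z) (p : pt) : pt := (fst p + IZR j, snd p).

Definition sat (X : pset) : pset := fun q => exists j, X (shift j q).

Lemma shift_add j k p : shift j (shift k p) = shift (j + k) p.
Proof. unfold shift; simpl. rewrite plus_IZR. f_equal. ring. Qed.

Lemma shift_0 p : shift 0 p = p.
Proof. destruct p; unfold shift; simpl. f_equal. ring. Qed.

Lemma T1_shift p : T1 p = shift 1 p.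
Proof. reflexivity. Qed.

Lemma invariant_shift X : invariant X -> forall j p, X p <-> X (shift j p).
Proof.
  intros HX j. induction j using Z.peano_ind; intros p.
  - rewrite shift_0. tauto.
  - replace (shift (Z.succ j) p) with (T1 (shift j p)).
    + rewrite (IHj p). apply HX.
    + rewrite T1_shift, shift_add. f_equal. lia.
  - rewrite (IHj p). replace (shift j p) with (T1 (shift (Z.pred j) p)).
    + symmetry. apply HX.
    + rewrite T1_shift, shift_add. f_equal. lia.
Qed.

Lemma near_shift e j p q : near e (shift j p) (shift j q) <-> near e p q.
Proof. rewrite !near_iff. unfold shift; simpl. split; intros; lra. Qed.

Lemma closure_shift X j p : invariant X -> closure2 X p -> closure2 X (shift j p).
Proof.
  intros HX Hp e He. destruct (Hp e He) as [q [Xq Nq]]. exists (shift j q).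
  split; [apply invariant_shift; auto|]. apply near_shift; auto.
Qed.

Lemma closure_invariant X : invariant X -> invariant (closure2 X).
Proof.
  intros HX p. rewrite T1_shift. split; [apply closure_shift; auto|].
  intros H. rewrite <- (shift_0 p). replace 0%Z with (-1 + 1)%Z by lia.
  rewrite <- shift_add. apply closure_shift; auto.
Qed.

Lemma sat_incl X p : X p -> sat X p.
Proof. intros H. exists 0%Z. rewrite shift_0; auto. Qed.

Lemma sat_invariant X : invariant (sat X).
Proof.
  intros p. rewrite T1_shift. split; intros [j Hj].
  - exists (j - 1)%Z. rewrite shift_add. replace (j - 1 + 1)%Z with j by lia. auto.
  - exists (j + 1)%Z. rewrite shift_add in Hj. auto.
Qed.

Lemma sat_open X : open2 X -> open2 (sat X).
Proof.
  intros HX p [j Hj]. destruct (HX _ Hj) as [e [He H]]. exists e. split; auto.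
  intros q Hq. exists j. apply H. apply near_shift; auto.
Qed.

Lemma sat_openA X : open2 X -> openA (sat X).
Proof. intros; split; [apply sat_invariant|apply sat_open; auto]. Qed.

Lemma sat_incl_invariant A X :
  invariant A -> (forall p, X p -> A p) -> forall p, sat X p -> A p.
Proof. intros HA H p [j Hj]. apply (invariant_shift A HA j). auto. Qed.

Lemma shifts_avoid_uniformly (P : pset) q :
  (forall j, exists e, 0 < e /\ forall r, near e (shift j q) r -> ~ P r) ->
  forall n lo, exists e, 0 < e /\ forall j, (lo <= j <= lo + Z.of_nat n)%Z ->
    forall r, near e (shift j q) r -> ~ P r.
Proof.
  intros H. induction n as [|n IH]; intros lo.
  - destruct (H lo) as [e [He H2]]. exists e. split; auto.
    intros j Hj. replace j with lo by lia. auto.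
  - destruct (IH lo) as [e1 [He1 H1]].
    destruct (H (lo + Z.of_nat (S n))%Z) as [e2 [He2 H2]].
    exists (Rmin e1 e2). split; [apply Rmin_glb_lt; auto|].
    intros j Hj r Hr. destruct (Z.eq_dec j (lo + Z.of_nat (S n))%Z) as [->|Hne].
    + apply H2. eapply near_mono; [apply Rmin_r|eauto].
    + apply (H1 j); [lia|]. eapply near_mono; [apply Rmin_l|eauto].
Qed.

(* The saturation of a closed, horizontally bounded set is closed: near a
   given point only finitely many translates matter. *)
Lemma sat_closed P a b : closed2 P -> (forall p, P p -> a <= fst p <= b) -> closed2 (sat P).
Proof.
  intros HP Hb q Hq. apply NNPP; intro Hn.
  assert (Hj : forall j, exists e, 0 < e /\ forall r, near e (shift j q) r -> ~ P r).
  { intros j. apply not_in_closure. intro Hc. apply Hn. exists j. apply HP; auto. }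
  set (lo := (up (a - fst q - 1) - 1)%Z).
  set (n := Z.to_nat (up (b - fst q + 1) - lo)).
  destruct (shifts_avoid_uniformly P q Hj n lo) as [e [He H]].
  destruct (Hq (Rmin e 1)) as [r [[j Pj] Nr]]; [apply Rmin_glb_lt; lra|].
  assert (Hr1 : near 1 q r) by (eapply near_mono; [apply Rmin_r|eauto]).
  assert (Hre : near e q r) by (eapply near_mono; [apply Rmin_l|eauto]).
  apply (H j) with (shift j r); [|apply near_shift; auto|auto].
  specialize (Hb _ Pj). unfold shift in Hb; simpl in Hb. apply near_iff in Hr1.
  destruct (archimed (a - fst q - 1)) as [A1 A2].
  destruct (archimed (b - fst q + 1)) as [B1 B2].
  assert (L1 : (lo < j)%Z) by (apply lt_IZR; unfold lo; rewrite minus_IZR; simpl; lra).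
  assert (L2 : (j < up (b - fst q + 1))%Z) by (apply lt_IZR; lra).
  unfold n. rewrite Z2Nat.id; lia.
Qed.

Definition seg (p q : pt) (t : R) : pt :=
  (fst p + t * (fst q - fst p), snd p + t * (snd q - snd p)).

Lemma seg0 p q : seg p q 0 = p.
Proof. destruct p; unfold seg; simpl; f_equal; ring. Qed.

Lemma seg1 p q : seg p q 1 = q.
Proof. destruct p, q; unfold seg; simpl; f_equal; ring. Qed.

Lemma seg_continuous (W : pset) p q t : open2 W -> W (seg p q t) ->
  exists d, 0 < d /\ forall s, Rabs (s - t) < d -> W (seg p q s).
Proof.
  intros HW Ht. destruct (HW _ Ht) as [e [He H]].
  set (K := Rabs (fst q - fst p) + Rabs (snd q - snd p) + 1).
  pose proof (Rabs_pos (fst q - fst p)). pose proof (Rabs_pos (snd q - snd p)).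
  assert (HK : 0 < K) by (unfold K; lra).
  exists (e / K). split; [apply Rdiv_lt_0_compat; auto|].
  intros s Hs. apply H.
  assert (Hs2 : Rabs (s - t) * K < e).
  { apply (Rmult_lt_compat_r K) in Hs; auto.
    unfold Rdiv in Hs. rewrite Rmult_assoc, Rinv_l in Hs; lra. }
  pose proof (Rabs_pos (s - t)).
  unfold near, seg; simpl. split.
  - replace (fst p + t * (fst q - fst p) - (fst p + s * (fst q - fst p)))
      with (- ((s - t) * (fst q - fst p))) by ring.
    rewrite Rabs_Ropp, Rabs_mult. unfold K in Hs2. nra.
  - replace (snd p + t * (snd q - snd p) - (snd p + s * (snd q - snd p)))
      with (- ((s - t) * (snd q - snd p))) by ring.
    rewrite Rabs_Ropp, Rabs_mult. unfold K in Hs2. nra.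
Qed.

(* The crossing
   point is found as the supremum of the initial stretch inside U. *)
Lemma segment_crossing (U V : pset) p q :
  open2 U -> open2 V -> (forall t, 0 <= t <= 1 -> U (seg p q t) \/ V (seg p q t)) ->
  U p -> V q -> exists t, 0 <= t <= 1 /\ U (seg p q t) /\ V (seg p q t).
Proof.
  intros HU HV Hc Up Vq.
  set (E := fun t => 0 <= t <= 1 /\ forall s, 0 <= s <= t -> U (seg p q s)).
  assert (E0 : E 0).
  { split; [lra|]. intros s Hs. replace s with 0 by lra. rewrite seg0; auto. }
  assert (Eb : bound E) by (exists 1; intros t [Ht _]; lra).
  destruct (completeness E Eb (ex_intro _ 0 E0)) as [m [Hm1 Hm2]].
  assert (Hm0 : 0 <= m) by (apply Hm1; auto).
  assert (Hm1' : m <= 1) by (apply Hm2; intros t [Ht _]; lra).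
  assert (Hbelow : forall s, 0 <= s < m -> U (seg p q s)).
  { intros s Hs. destruct (classic (exists t, E t /\ s <= t)) as [[t [[_ Ht] Hst]]|Hn].
    - apply Ht. lra.
    - exfalso. assert (m <= s); [|lra]. apply Hm2. intros t Et.
      destruct (Rle_dec t s); auto. exfalso. apply Hn. exists t. split; auto; lra. }
  destruct (Hc m (conj Hm0 Hm1')) as [Um|Vm].
  - destruct (seg_continuous U p q m HU Um) as [d [Hd Hdd]].
    destruct (Req_dec m 1) as [->|Hne].
    + exists 1. split; [lra|]. rewrite seg1 in *. auto.
    + exfalso. set (s' := Rmin 1 (m + d/2)).
      assert (Es' : E s').
      { split; [unfold s'; split; [apply Rmin_glb; lra|apply Rmin_l]|].
        intros s Hs. destruct (Rlt_dec s m); [apply Hbelow; lra|].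
        apply Hdd. assert (s <= m + d/2) by (eapply Rle_trans; [apply Hs|apply Rmin_r]).
        rewrite Rabs_right; lra. }
      assert (Hle : s' <= m) by (apply Hm1; auto).
      unfold s', Rmin in Hle. destruct (Rle_dec 1 (m + d/2)); lra.
  - destruct (Req_dec m 0) as [->|Hne].
    + exists 0. split; [lra|]. rewrite seg0 in *. auto.
    + destruct (seg_continuous V p q m HV Vm) as [d [Hd Hdd]].
      set (s := Rmax 0 (m - d/2)).
      assert (Hs1 : 0 <= s) by apply Rmax_l.
      assert (Hs2 : s < m) by (unfold s, Rmax; destruct (Rle_dec 0 (m - d/2)); lra).
      assert (Hs3 : m - d/2 <= s) by apply Rmax_r.
      exists s. split; [lra|]. split; [apply Hbelow; lra|]. apply Hdd.
      rewrite Rabs_left; lra.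
Qed.

Lemma convex_comb_lt a b e t : a < e -> b < e -> 0 <= t <= 1 -> (1 - t) * a + t * b < e.
Proof.
  intros Ha Hb Ht.
  assert (0 <= (1 - t) * (e - a)) by (apply Rmult_le_pos; lra).
  destruct (Req_dec t 0) as [->|Hne]; [lra|].
  assert (0 < t * (e - b)) by (apply Rmult_lt_0_compat; lra). lra.
Qed.

(* Balls are convex, hence connected. *)
Lemma ball_connected e c : connected_wrt open2 (near e c).
Proof.
  intros [U [V [HU [HV [Hc [[p [Bp Up]] [[q [Bq Vq]] Hd]]]]]]].
  assert (Hseg : forall t, 0 <= t <= 1 -> near e c (seg p q t)).
  { intros t Ht. unfold_near. apply near_iff. unfold seg; simpl.
    pose proof (convex_comb_lt (fst p - fst c) (fst q - fst c) e t).
    pose proof (convex_comb_lt (fst c - fst p) (fst c - fst q) e t).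
    pose proof (convex_comb_lt (snd p - snd c) (snd q - snd c) e t).
    pose proof (convex_comb_lt (snd c - snd p) (snd c - snd q) e t).
    repeat split; nra. }
  destruct (segment_crossing U V p q HU HV (fun t Ht => Hc _ (Hseg t Ht)) Up Vq)
    as [t [Ht [U1 V1]]].
  exact (Hd _ (Hseg t Ht) U1 V1).
Qed.

Lemma plane_connected U :
  open2 U -> open2 (fun p => ~ U p) -> (exists p, U p) -> (exists q, ~ U q) -> False.
Proof.
  intros HU HV [p Up] [q Vq].
  destruct (segment_crossing U (fun p => ~ U p) p q HU HV) as [t [_ [Ut nUt]]]; auto.
  intros t _. apply classic.
Qed.

Lemma openA_open2 U : openA U -> open2 U.
Proof. intros [_ H]; auto. Qed.

Lemma connected_coarser (op1 op2 : pset -> Prop) X :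
  (forall U, op1 U -> op2 U) -> connected_wrt op2 X -> connected_wrt op1 X.
Proof. intros H HX [U [V [HU [HV R]]]]. apply HX. exists U, V. auto. Qed.

Lemma connected_one_side (op : pset -> Prop) X U V : connected_wrt op X -> op U -> op V ->
  (forall p, X p -> U p \/ V p) -> (forall p, X p -> U p -> V p -> False) ->
  (forall p, X p -> U p) \/ (forall p, X p -> V p).
Proof.
  intros HX HU HV Hc Hd.
  destruct (classic (exists p, X p /\ U p)) as [HU1|HU1];
  destruct (classic (exists p, X p /\ V p)) as [HV1|HV1].
  - exfalso. apply HX. exists U, V. auto 10.
  - left. intros p Xp. destruct (Hc p Xp); auto. exfalso; apply HV1; eauto.
  - right. intros p Xp. destruct (Hc p Xp); auto. exfalso; apply HU1; eauto.
  - left. intros p Xp. destruct (Hc p Xp); [auto|exfalso; apply HV1; eauto].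
Qed.

Lemma connected_union_through (op : pset -> Prop) (Z : pset) q :
  (forall r, Z r -> exists D, connected_wrt op D /\ (forall x, D x -> Z x) /\ D q /\ D r) ->
  connected_wrt op Z.
Proof.
  intros H [U [V [HU [HV [Hc [[a [Za Ua]] [[b [Zb Vb]] Hd]]]]]]].
  destruct (H a Za) as [Da [Ca [Sa [Dqa Daa]]]].
  destruct (H b Zb) as [Db [Cb [Sb [Dqb Dbb]]]].
  destruct (Hc q (Sa q Dqa)) as [Uq|Vq].
  - apply Cb. exists U, V. refine (conj HU (conj HV (conj _ (conj _ (conj _ _))))).
    + intros p Dp. apply Hc; auto.
    + exists q; auto.
    + exists b; auto.
    + intros p Dp. apply Hd; auto.
  - apply Ca. exists U, V. refine (conj HU (conj HV (conj _ (conj _ (conj _ _))))).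
    + intros p Dp. apply Hc; auto.
    + exists a; auto.
    + exists q; auto.
    + intros p Dp. apply Hd; auto.
Qed.

Lemma connected_closure (op : pset -> Prop) X : (forall U, op U -> open2 U) ->
  connected_wrt op X -> connected_wrt op (closure2 X).
Proof.
  intros Hop HX [U [V [HU [HV [Hc [[a [Ca Ua]] [[b [Cb Vb]] Hd]]]]]]].
  apply HX. exists U, V. refine (conj HU (conj HV (conj _ (conj _ (conj _ _))))).
  - intros p Xp. apply Hc, closure_incl; auto.
  - destruct (Hop U HU a Ua) as [e [He H]]. destruct (Ca e He) as [q [Xq Nq]]. exists q; auto.
  - destruct (Hop V HV b Vb) as [e [He H]]. destruct (Cb e He) as [q [Xq Nq]]. exists q; auto.
  - intros p Xp. apply Hd, closure_incl; auto.
Qed.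

Lemma connected_singleton (op : pset -> Prop) q : connected_wrt op (fun x => x = q).
Proof. intros [U [V [_ [_ [_ [[a [-> Ua]] [[b [-> Vb]] Hd]]]]]]]. eapply Hd; eauto. Qed.

Lemma sat_connected D : connected_wrt openA D -> connected_wrt openA (sat D).
Proof.
  intros HD [U [V [HU [HV [Hc [[a [Sa Ua]] [[b [Sb Vb]] Hd]]]]]]].
  destruct (connected_one_side openA D U V HD HU HV) as [HDU|HDV].
  - intros p Dp. apply Hc, sat_incl; auto.
  - intros p Dp. apply Hd, sat_incl; auto.
  - destruct Sb as [j Dj]. apply (Hd (shift j b)); [apply sat_incl; auto|auto|].
    apply (invariant_shift V (proj1 HV)); auto.
  - destruct Sa as [j Dj]. apply (Hd (shift j a)); [apply sat_incl; auto| |auto].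
    apply (invariant_shift U (proj1 HU)); auto.
Qed.

Lemma connected_closed_split S P Q : connected_wrt open2 S -> closed2 P -> closed2 Q ->
  (forall p, S p -> P p \/ Q p) -> (forall p, S p -> P p -> Q p -> False) ->
  (exists p, S p /\ P p) -> (exists q, S q /\ Q q) -> False.
Proof.
  intros HS HP HQ Hc Hd [p [Sp Pp]] [q [Sq Qq]].
  destruct (connected_one_side open2 S (fun x => ~ Q x) (fun x => ~ P x) HS)
    as [H|H]; try apply closed_compl_open; auto.
  - intros x Sx. destruct (Hc x Sx); [left|right]; intro; eauto.
  - intros x Sx nQ nP. destruct (Hc x Sx); auto.
  - exact (H q Sq Qq).
  - exact (H p Sp Pp).
Qed.

Lemma component_closed S Y :
  component_wrt open2 S Y -> (forall p, closure2 S p -> Y p) -> closed2 S.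
Proof.
  intros [_ [_ [HSconn HSmax]]] HY p Hp.
  apply (HSmax (closure2 S)); auto.
  - intros; apply closure_incl; auto.
  - apply connected_closure; auto.
Qed.

(* Finite covers are manipulated through lists of optional indices; [flat_some]
   keeps the actual indices. *)
Definition flat_some {I : Type} (l : list (option I)) : list I :=
  flat_map (fun o => match o with Some i => i :: nil | None => nil end) l.

Lemma in_flat_some {I : Type} (l : list (option I)) i : In (Some i) l -> In i (flat_some l).
Proof. intros H. unfold flat_some. apply in_flat_map. exists (Some i). simpl; auto. Qed.

Lemma compactA_closed A : invariant A -> compactA A -> closed2 A.
Proof.
  intros HA Hc p Hp. apply NNPP; intro Hn.
  set (O := sat (fun x => x = p)).
  assert (HO : closed2 O)
    by (apply (sat_closed _ (fst p) (fst p)); [apply closed_singleton|intros x ->; lra]).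
  set (G0 := fun (d : R) (q : pt) => 0 < d /\
               exists e, 0 < e /\ forall r, near e q r -> forall j, ~ near d r (shift j p)).
  assert (HG0 : forall d, open2 (G0 d)).
  { intros d q [Hd [e [He H]]]. exists (e/2). split; [lra|]. intros q' Hq'. split; auto.
    exists (e/2). split; [lra|]. intros r Hr. apply H.
    replace e with (e/2 + e/2) by field. eapply near_trans; eauto. }
  destruct (Hc R (fun d => sat (G0 d))) as [l Hl].
  - intros d. apply sat_openA; auto.
  - intros q Aq. assert (HnO : ~ O q).
    { intros [j Hj]. apply Hn. rewrite <- Hj. apply (proj1 (invariant_shift A HA j q)). auto. }
    destruct (not_in_closure O q (fun H' => HnO (HO q H'))) as [e0 [He0 H0]].
    exists (e0/2). apply sat_incl. split; [lra|]. exists (e0/2). split; [lra|].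
    intros r Hr j Hj. apply (H0 (shift j p)).
    + replace e0 with (e0/2 + e0/2) by field. eapply near_trans; eauto.
    + exists (- j)%Z. rewrite shift_add. replace (-j + j)%Z with 0%Z by lia. apply shift_0.
  - destruct (positive_list_min l) as [d [Hd Hdl]].
    destruct (Hp d Hd) as [r [Ar Nr]].
    destruct (Hl r Ar) as [d' [Hin [j [Hd' [e [He H]]]]]].
    apply (H (shift j r) (near_refl _ _ He) j). apply near_shift. apply near_sym.
    eapply near_mono; [apply Hdl; auto|exact Nr].
Qed.

(* A closed piece of A of width less than one is compact: it embeds in A. *)
Lemma compact_narrow_piece A P c : invariant A -> compactA A -> closed2 P ->
  (forall p, P p -> c < fst p < c + 3/4) -> compact2 (fun p => A p /\ P p).
Proof.
  intros HA Hc HP Hb I W HW Hcov.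
  set (G := fun o : option I => match o with
       | Some i => sat (fun x => W i x /\ c < fst x < c + 3/4)
       | None => fun q => ~ sat P q end).
  destruct (Hc (option I) G) as [l Hl].
  - intros [i|]; simpl.
    + apply sat_openA. apply open_and; auto.
      intros p Hp. exists (Rmin (fst p - c) (c + 3/4 - fst p)).
      split; [apply Rmin_glb_lt; lra|]. intros q Hq.
      pose proof (Rmin_l (fst p - c) (c + 3/4 - fst p)).
      pose proof (Rmin_r (fst p - c) (c + 3/4 - fst p)). near_lra.
    + split.
      * intros q. pose proof (sat_invariant P q). tauto.
      * apply closed_compl_open. apply (sat_closed P c (c + 3/4)); auto.
        intros p Pp. specialize (Hb p Pp). lra.
  - intros q Aq. destruct (classic (sat P q)) as [[j Pj]|Hn].
    + destruct (Hcov (shift j q)) as [i Hi].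
      { split; auto. apply (proj1 (invariant_shift A HA j q)); auto. }
      exists (Some i). simpl. exists j. split; auto.
    + exists None. simpl. auto.
  - exists (flat_some l). intros x [Ax Px].
    destruct (Hl x Ax) as [[i|] [Hin Hx]]; simpl in Hx.
    + destruct Hx as [j [Wj Sj]]. pose proof (Hb x Px). unfold shift in Sj; simpl in Sj.
      assert (j = 0%Z).
      { assert (Hlo : IZR (-1) < IZR j) by (simpl; lra).
        assert (Hhi : IZR j < IZR 1) by (simpl; lra).
        apply lt_IZR in Hlo. apply lt_IZR in Hhi. lia. }
      subst j. rewrite shift_0 in Wj. exists i. split; auto. apply in_flat_some; auto.
    + exfalso. apply Hx. apply sat_incl; auto.
Qed.

Lemma compact2_union X X1 X2 : compact2 X1 -> compact2 X2 ->
  (forall p, X p -> X1 p \/ X2 p) -> (forall p, X1 p -> X p) -> (forall p, X2 p -> X p) ->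
  compact2 X.
Proof.
  intros H1 H2 H H1s H2s I U HU Hc.
  destruct (H1 I U HU) as [l1 Hl1]; [intros; apply Hc; auto|].
  destruct (H2 I U HU) as [l2 Hl2]; [intros; apply Hc; auto|].
  exists (l1 ++ l2). intros p Xp. destruct (H p Xp) as [Hp|Hp].
  - destruct (Hl1 p Hp) as [i [Hi Ui]]. exists i. split; auto. apply in_or_app; auto.
  - destruct (Hl2 p Hp) as [i [Hi Ui]]. exists i. split; auto. apply in_or_app; auto.
Qed.

(* Pieces of width n/2 are compact, by cutting off slices of width 1/2. *)
Lemma compact_piece_of_width A : invariant A -> compactA A ->
  forall n P a, closed2 P -> (forall p, P p -> a <= fst p <= a + INR n / 2) ->
  compact2 (fun p => A p /\ P p).
Proof.
  intros HA Hc n. induction n as [|n IH]; intros P a HP Hb.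
  - apply (compact_narrow_piece A P (a - 1/4)); auto.
    intros p Pp. specialize (Hb p Pp). simpl in Hb. lra.
  - apply (compact2_union _ (fun p => A p /\ (P p /\ fst p <= a + 1/2))
                            (fun p => A p /\ (P p /\ a + 1/2 <= fst p))).
    + apply (compact_narrow_piece A _ (a - 1/8)); auto. apply closed_fst_le; auto.
      intros p [Pp Hp]. specialize (Hb p Pp). lra.
    + apply (IH _ (a + 1/2)). apply closed_fst_ge; auto.
      intros p [Pp Hp]. specialize (Hb p Pp). rewrite S_INR in Hb. lra.
    + intros p [Ap Pp]. destruct (Rle_dec (fst p) (a + 1/2)); [left|right]; repeat split; auto; lra.
    + tauto.
    + tauto.
Qed.

Lemma compact_bounded_piece A P a b : invariant A -> compactA A -> closed2 P ->
  (forall p, P p -> a <= fst p <= b) -> compact2 (fun p => A p /\ P p).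
Proof.
  intros HA Hc HP Hb.
  destruct (archimed (2 * (b - a))) as [H1 H2].
  apply (compact_piece_of_width A HA Hc (Z.to_nat (up (2 * (b - a)))) P a HP).
  intros p Pp. specialize (Hb p Pp). split; [lra|].
  assert (0 <= up (2 * (b - a)))%Z by (apply le_IZR; simpl; lra).
  rewrite INR_IZR_INZ, Z2Nat.id; auto. lra.
Qed.

Lemma compact2_closed_sub X G : compact2 X -> closed2 G -> (forall p, G p -> X p) -> compact2 G.
Proof.
  intros HX HG Hs I U HU Hc.
  set (F := fun o : option I => match o with Some i => U i | None => fun p => ~ G p end).
  destruct (HX (option I) F) as [l Hl].
  - intros [i|]; simpl; auto. apply closed_compl_open; auto.
  - intros p Xp. destruct (classic (G p)) as [Gp|Gp].
    + destruct (Hc p Gp) as [i Hi]. exists (Some i); auto.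
    + exists None; auto.
  - exists (flat_some l). intros p Gp.
    destruct (Hl p (Hs p Gp)) as [[i|] [Hin Hi]]; simpl in Hi.
    + exists i. split; auto. apply in_flat_some; auto.
    + contradiction.
Qed.

Lemma compact_closed_gap K Z : compact2 K -> closed2 Z -> (forall p, K p -> ~ Z p) ->
  exists eps, 0 < eps /\ forall s p, K s -> near (2 * eps) s p -> ~ Z p.
Proof.
  intros HK HZ Hd.
  set (U := fun (i : pt * R) p =>
              (K (fst i) /\ 0 < snd i /\ forall q, near (snd i) (fst i) q -> ~ Z q) /\
              near (snd i / 2) (fst i) p).
  destruct (HK (pt * R)%type U) as [l Hl].
  - intros i. apply open_guarded_ball.
  - intros p Kp. destruct (not_in_closure Z p (fun H => Hd p Kp (HZ p H))) as [r [Hr H]].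
    exists (p, r). unfold U; simpl. split; [split; [auto|split; auto]|apply near_refl; lra].
  - destruct (positive_list_min (map snd l)) as [d [Hdp Hdl]].
    exists (d/4). split; [lra|]. intros s p Ks Np.
    destruct (Hl s Ks) as [[s' r] [Hin [[_ [Hr Hn]] Ns]]]; simpl in *.
    assert (d <= r) by (apply Hdl; auto; apply in_map_iff; exists (s', r); auto).
    apply Hn. replace r with (r/2 + r/2) by field.
    eapply near_trans; [exact Ns|]. eapply near_mono; [|exact Np]. lra.
Qed.

Lemma plane_normal K1 K2 : closed2 K1 -> closed2 K2 -> (forall p, K1 p -> K2 p -> False) ->
  exists U1 V1, open2 U1 /\ open2 V1 /\ (forall p, K1 p -> U1 p) /\ (forall p, K2 p -> V1 p) /\
    (forall p, U1 p -> V1 p -> False).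
Proof.
  intros H1 H2 Hd.
  set (Bd := fun (Ka Kb : pset) (i : pt * R) p =>
               (Ka (fst i) /\ 0 < snd i /\ forall q, near (snd i) (fst i) q -> ~ Kb q) /\
               near (snd i / 2) (fst i) p).
  exists (fun p => exists i, Bd K1 K2 i p), (fun p => exists i, Bd K2 K1 i p).
  split; [apply open_ex; intros; apply open_guarded_ball|].
  split; [apply open_ex; intros; apply open_guarded_ball|].
  split; [|split].
  - intros p Kp. destruct (not_in_closure K2 p (fun H => Hd p Kp (H2 p H))) as [r [Hr H]].
    exists (p, r). unfold Bd; simpl. split; [split; [auto|split; auto]|apply near_refl; lra].
  - intros p Kp. destruct (not_in_closure K1 p (fun H => Hd p (H1 p H) Kp)) as [r [Hr H]].
    exists (p, r). unfold Bd; simpl. split; [split; [auto|split; auto]|apply near_refl; lra].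
  - intros p [[a r] [[Ka [Hr Ha]] Na]] [[b s] [[Kb [Hs Hb]] Nb]]; simpl in *.
    destruct (Rle_dec r s).
    + apply (Hb a); auto. near_lra.
    + apply (Ha b); auto. near_lra.
Qed.

Definition separates (X S U V : pset) : Prop :=
  open2 U /\ open2 V /\ (forall p, X p -> U p \/ V p) /\
  (forall p, X p -> U p -> V p -> False) /\ (forall p, S p -> U p).

(* The proof shows that the
   quasi-component of S (the points lying on the S-side of every separation)
   is connected, hence equal to S, and then uses compactness. *)
Section ShuraBura.
Variables X S : pset.
Hypothesis HXc : closed2 X.
Hypothesis HXk : compact2 X.
Hypothesis HSconn : connected_wrt open2 S.
Hypothesis HSX : forall p, S p -> X p.
Hypothesis HSmax : forall D, (forall p, S p -> D p) -> (forall p, D p -> X p) ->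
  connected_wrt open2 D -> forall p, D p -> S p.

Definition quasi_component : pset :=
  fun p => X p /\ forall U V, separates X S U V -> U p.

Lemma quasi_component_closed : closed2 quasi_component.
Proof.
  intros p Hp.
  assert (Xp : X p) by (apply HXc; eapply closure_mono; [|exact Hp]; intros q [H _]; auto).
  split; auto. intros U V [HU [HV [Hc [Hd HS]]]].
  destruct (Hc p Xp) as [Up|Vp]; auto. exfalso.
  destruct (HV p Vp) as [e [He H]]. destruct (Hp e He) as [q [[Xq Hq] Nq]].
  apply (Hd q Xq); [apply (Hq U V); exact (conj HU (conj HV (conj Hc (conj Hd HS))))|].
  apply H; auto.
Qed.

Lemma component_in_quasi_component p : S p -> quasi_component p.
Proof. intros Sp. split; auto. intros U V [_ [_ [_ [_ H]]]]. auto. Qed.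

(* By compactness, finitely many separations already push a closed set G
   missing the quasi-component to the V-side. *)
Lemma separation_from_closed G : closed2 G -> (forall p, G p -> X p) ->
  (forall p, G p -> ~ quasi_component p) ->
  exists U V, separates X S U V /\ forall p, G p -> V p.
Proof.
  intros HG HGX HGQ.
  set (I := {uv : pset * pset | separates X S (fst uv) (snd uv)}).
  set (Vf := fun i : I => snd (proj1_sig i)).
  set (Uf := fun i : I => fst (proj1_sig i)).
  assert (HGk : compact2 G) by (apply (compact2_closed_sub X); auto).
  destruct (HGk I Vf) as [l Hl].
  - intros i. unfold Vf. destruct (proj2_sig i) as [HU [HV _]]. exact HV.
  - intros g Gg.
    assert (Hn : ~ forall U V, separates X S U V -> U g) by (intro H'; apply (HGQ g Gg); split; auto).
    apply not_all_ex_not in Hn. destruct Hn as [U Hn].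
    apply not_all_ex_not in Hn. destruct Hn as [V Hn].
    apply imply_to_and in Hn. destruct Hn as [Hs Hn].
    exists (exist _ (U, V) Hs). unfold Vf; simpl. destruct Hs as [_ [_ [Hc _]]].
    destruct (Hc g (HGX g Gg)); tauto.
  - exists (fun p => forall i, In i l -> Uf i p), (fun p => exists i, In i l /\ Vf i p).
    split; [split; [|split; [|split; [|split]]]|].
    + apply open_list_inter. intros i. unfold Uf. destruct (proj2_sig i) as [HU _]. exact HU.
    + intros p [i [Hi Vi]]. destruct (proj2_sig i) as [HU [HV _]]. unfold Vf in Vi.
      destruct (HV p Vi) as [e [He H]]. exists e. split; auto. intros q Hq.
      exists i. split; [exact Hi|]. unfold Vf. auto.
    + intros p Xp. destruct (classic (forall i, In i l -> Uf i p)) as [H|H]; [left; auto|right].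
      apply not_all_ex_not in H. destruct H as [i H]. apply imply_to_and in H.
      destruct H as [Hi Hn]. exists i. split; auto.
      destruct (proj2_sig i) as [_ [_ [Hc _]]]. unfold Uf, Vf in *.
      destruct (Hc p Xp); tauto.
    + intros p Xp HU [i [Hi Vi]]. specialize (HU i Hi).
      destruct (proj2_sig i) as [_ [_ [_ [Hd _]]]]. unfold Uf, Vf in *. eauto.
    + intros p Sp i _. destruct (proj2_sig i) as [_ [_ [_ [_ HS]]]]. unfold Uf. auto.
    + intros p Gp. destruct (Hl p Gp) as [i [Hi Vi]]. eauto.
Qed.

(* A separation U0, V0 of the quasi-component with S in U0 leaves nothing in
   V0: by normality it extends to a separation of X, which then puts every
   point of the quasi-component on the U0-side. *)
Lemma quasi_component_side U0 V0 q : open2 U0 -> open2 V0 ->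
  (forall p, quasi_component p -> U0 p \/ V0 p) ->
  (forall p, quasi_component p -> U0 p -> V0 p -> False) ->
  (forall p, S p -> U0 p) -> quasi_component q -> V0 q -> False.
Proof.
  intros HU0 HV0 Hc Hd HSU Qq Vq.
  set (K1 := fun p => quasi_component p /\ ~ V0 p).
  set (K2 := fun p => quasi_component p /\ ~ U0 p).
  destruct (plane_normal K1 K2) as [U1 [V1 [HU1 [HV1 [HK1 [HK2 Hd1]]]]]].
  - apply closed_diff_open; auto. apply quasi_component_closed.
  - apply closed_diff_open; auto. apply quasi_component_closed.
  - intros p [Qp Vp] [_ Up]. destruct (Hc p Qp); auto.
  - set (G := fun p => (X p /\ ~ U1 p) /\ ~ V1 p).
    destruct (separation_from_closed G) as [U [V [[HU [HV [Hc2 [Hd2 HS2]]]] HGV]]].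
    + repeat apply closed_diff_open; auto.
    + intros p [[Xp _] _]; auto.
    + intros p [[Xp HnU] HnV] Qp. destruct (Hc p Qp) as [Up|Vp].
      * apply HnU, HK1. split; auto. intro. eauto.
      * apply HnV, HK2. split; auto. intro. eauto.
    + assert (Hs : separates X S (fun p => U p /\ U1 p) (fun p => V p \/ V1 p)).
      { split; [apply open_and; auto|]. split; [apply open_or; auto|].
        split; [|split].
        - intros p Xp. destruct (classic (V p)); [right; left; auto|].
          destruct (Hc2 p Xp) as [Up|]; [|contradiction].
          destruct (classic (U1 p)); [left; auto|].
          destruct (classic (V1 p)); [right; right; auto|].
          exfalso. apply H. apply HGV. repeat split; auto.
        - intros p Xp [Up U1p] [Vp|V1p]; eauto.
        - intros p Sp. split; auto. apply HK1. split; [apply component_in_quasi_component; auto|].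
          intro. apply (Hd p); auto. apply component_in_quasi_component; auto. }
      destruct Qq as [Xq HQq]. pose proof (HQq _ _ Hs) as [_ U1q].
      apply (Hd1 q); auto. apply HK2. split; [split; auto|].
      intro. apply (Hd q); auto. split; auto.
Qed.

Lemma quasi_component_connected : connected_wrt open2 quasi_component.
Proof.
  intros [U0 [V0 [HU0 [HV0 [Hc [[q1 [Qq1 Uq1]] [[q2 [Qq2 Vq2]] Hd]]]]]]].
  destruct (connected_one_side open2 S U0 V0 HSconn HU0 HV0) as [HSU|HSV].
  - intros p Sp. apply Hc, component_in_quasi_component; auto.
  - intros p Sp. apply Hd, component_in_quasi_component; auto.
  - apply (quasi_component_side U0 V0 q2); auto.
  - apply (quasi_component_side V0 U0 q1); auto.
    + intros p Qp. destruct (Hc p Qp); auto.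
    + intros p Qp H1 H2. eapply Hd; eauto.
Qed.

Lemma shura_bura F : closed2 F -> (forall p, F p -> X p) -> (forall p, F p -> ~ S p) ->
  exists U V, separates X S U V /\ forall p, F p -> V p.
Proof.
  intros HF HFX HFS. apply separation_from_closed; auto.
  intros p Fp Qp. apply (HFS p Fp). apply (HSmax quasi_component); auto.
  - apply component_in_quasi_component.
  - intros q [Xq _]; auto.
  - apply quasi_component_connected.
Qed.
End ShuraBura.

(* Every point outside an invariant set lies in a component of its complement
   (the union of all connected sets through the point). *)
Lemma complement_component_exists A q :
  invariant A -> ~ A q -> exists C, componentA C (complement A) /\ C q.
Proof.
  intros HA Aq.
  set (C := fun r => exists D, connected_wrt openA D /\ (forall x, D x -> ~ A x) /\ D q /\ D r).
  assert (Hsat : forall D, (forall x, D x -> ~ A x) -> forall x, sat D x -> ~ A x).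
  { intros D HD x [j Hj] Ax. apply (HD _ Hj). apply (proj1 (invariant_shift A HA j x)); auto. }
  assert (Hq : C q).
  { exists (fun x => x = q). split; [apply connected_singleton|]. split; [intros x ->; auto|]. auto. }
  exists C. split; [|exact Hq]. split.
  - intros r. split; intros [D [HD [HDA [Dq Dr]]]]; exists (sat D);
      (split; [apply sat_connected; auto|]; split; [apply Hsat; auto|];
       split; [apply sat_incl; auto|]).
    + exists (-1)%Z. rewrite T1_shift, shift_add. replace (-1 + 1)%Z with 0%Z by lia.
      rewrite shift_0; auto.
    + exists 1%Z. rewrite <- T1_shift. auto.
  - split; [|split; [|split]].
    + exists q. exact Hq.
    + intros p [D [_ [HDA [_ Dp]]]]. apply HDA; auto.
    + apply (connected_union_through openA C q). intros r [D [HD [HDA [Dq Dr]]]].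
      exists D. split; auto. split; auto. intros x Dx. exists D. auto.
    + intros D HCD HDY HD p Dp. exists D. split; auto.
Qed.

(* A thin set lies in the closure of its complementary components: a ball
   inside A would be an open subset of A. *)
Lemma thin_in_closures A Up Um : invariant A -> thin A ->
  (forall C, componentA C (complement A) -> (forall p, C p <-> Up p) \/ (forall p, C p <-> Um p)) ->
  forall p, A p -> closure2 Up p \/ closure2 Um p.
Proof.
  intros HA Hth Hall p Ap. apply NNPP; intro Hn. apply not_or_and in Hn. destruct Hn as [H1 H2].
  destruct (not_in_closure _ _ H1) as [e1 [He1 B1]].
  destruct (not_in_closure _ _ H2) as [e2 [He2 B2]].
  set (e := Rmin e1 e2).
  assert (He : 0 < e) by (apply Rmin_glb_lt; auto).
  assert (Hball : forall q, near e p q -> A q).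
  { intros q Hq. apply NNPP; intro Aq.
    destruct (complement_component_exists A q HA Aq) as [C [HC Cq]].
    destruct (Hall C HC) as [H|H]; apply H in Cq.
    - apply (B1 q); auto. eapply near_mono; [apply Rmin_l|eauto].
    - apply (B2 q); auto. eapply near_mono; [apply Rmin_r|eauto]. }
  apply (Hth (sat (near e p)) (sat_openA _ (open_ball e p)) (sat_incl_invariant A _ HA Hball) p).
  apply sat_incl, near_refl; auto.
Qed.

(* A nonempty component W of the complement of a closed set A has a boundary
   point in A; otherwise W would be a nontrivial clopen subset of the plane. *)
Lemma component_closure_meets A W : invariant A -> closed2 A -> (exists a, A a) ->
  componentA W (complement A) -> (exists w, W w) -> exists a, A a /\ closure2 W a.
Proof.
  intros HAi HA [a0 Aa0] [HWi [_ [HWA [HWc HWmax]]]] [w Ww].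
  apply NNPP; intro Hn.
  assert (H : forall a, A a -> ~ closure2 W a) by (intros a Aa Hc; apply Hn; eauto).
  assert (HWo : open2 W).
  { intros p Wp. assert (Hp : ~ A p) by (apply HWA; auto).
    destruct (not_in_closure A p (fun Hc => Hp (HA p Hc))) as [e [He Hb]].
    exists e. split; auto. intros q Hq.
    refine (HWmax (fun x => W x \/ near e p x) _ _ _ q (or_intror Hq)).
    - intros; left; auto.
    - intros x [Wx|Nx]; [apply HWA; auto|apply Hb; auto].
    - refine (connected_union_through openA _ p _). intros r [Wr|Nr].
      + exists W. refine (conj HWc (conj _ (conj Wp Wr))). intros x Wx; left; exact Wx.
      + exists (near e p).
        split; [apply (connected_coarser openA open2); [apply openA_open2|apply ball_connected]|].
        split; [auto|]. split; [apply near_refl|]; auto. }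
  assert (Hcl : forall p, closure2 W p -> W p).
  { intros p0 Hp0. refine (HWmax (closure2 W) _ _ _ p0 Hp0).
    - intros; apply closure_incl; auto.
    - intros p Cp Ap. apply (H p Ap Cp).
    - apply connected_closure; auto. apply openA_open2. }
  apply (plane_connected W HWo).
  - apply closed_compl_open. exact Hcl.
  - exists w; auto.
  - exists a0. intro. apply (HWA a0); auto.
Qed.

Lemma bounded_clopen_piece_saturates A O a b :
  invariant A -> connectedA A -> open2 O ->
  closed2 (fun p => A p /\ O p) -> (forall p, A p -> O p -> a <= fst p <= b) ->
  (exists p, A p /\ O p) -> forall p, A p -> sat (fun q => A q /\ O q) p.
Proof.
  intros HAi HAconn HO HK Hb [p0 [Ap0 Op0]] p Ap. apply NNPP; intro Hn.
  set (K := fun q => A q /\ O q).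
  assert (HsatK : closed2 (sat K)) by (apply (sat_closed K a b HK); intros q [Aq Oq]; auto).
  apply HAconn. exists (sat O), (fun q => ~ sat K q).
  split; [apply sat_openA; auto|].
  split; [split; [intros q; pose proof (sat_invariant K q); tauto|apply closed_compl_open; auto]|].
  split; [|split; [|split]].
  - intros q Aq. destruct (classic (sat K q)) as [[j [_ Oj]]|]; [left; exists j; auto|right; auto].
  - exists p0. split; auto. apply sat_incl; auto.
  - exists p. split; auto.
  - intros q Aq [j Oj] HnK. apply HnK. exists j. split; auto.
    apply (proj1 (invariant_shift A HAi j q)); auto.
Qed.

Lemma separated_part_closed A N U V :
  closed2 (fun p => A p /\ closure2 N p) -> open2 V ->
  (forall p, A p /\ closure2 N p -> U p \/ V p) ->
  (forall p, A p /\ closure2 N p -> U p -> V p -> False) ->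
  (forall p, (A p /\ closure2 N p) /\ ~ N p -> V p) ->
  closed2 (fun p => A p /\ (U p /\ N p)).
Proof.
  intros HXc HV Hc Hd HFV p Hp.
  assert (Xp : A p /\ closure2 N p).
  { apply HXc. eapply closure_mono; [|exact Hp].
    intros q [Aq [_ Nq]]. split; auto. apply closure_incl; auto. }
  assert (nV : ~ V p).
  { intro Vp. destruct (HV p Vp) as [e [He H]].
    destruct (Hp e He) as [q [[Aq [Uq Nq]] Nq']].
    apply (Hd q); auto. split; auto. apply closure_incl; auto. }
  destruct (Hc p Xp) as [Up|]; [|contradiction].
  split; [apply Xp|]. split; auto. apply NNPP; intro Np. apply nV, HFV. split; auto.
Qed.

(* It is cut out of the compact set A /\ closure N, N an
   eps-neighbourhood of S away from Z, by the Shura-Bura lemma. *)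
Lemma bounded_clopen_nbhd A Z S : invariant A -> compactA A -> closed2 A -> closed2 Z ->
  (exists s, S s) -> closed2 S -> connected_wrt open2 S -> h_finite S ->
  (forall p, S p -> A p /\ ~ Z p) ->
  (forall D, (forall p, S p -> D p) -> (forall p, D p -> A p /\ ~ Z p) ->
     connected_wrt open2 D -> forall p, D p -> S p) ->
  exists O a b, open2 O /\ closed2 (fun p => A p /\ O p) /\
    (forall p, A p -> O p -> a <= fst p <= b) /\ (forall p, S p -> O p) /\
    (forall p, A p -> O p -> ~ Z p).
Proof.
  intros HAi HAc HAcl HZ [s0 Ss0] HScl HSconn [M HM] HSAZ HSmax.
  assert (HSb : forall p, S p -> fst s0 - M <= fst p <= fst s0 + M).
  { intros p Sp. pose proof (HM p s0 Sp Ss0). pose proof (HM s0 p Ss0 Sp). lra. }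
  assert (HSk : compact2 (fun p => A p /\ S p)) by (apply (compact_bounded_piece A S (fst s0 - M) (fst s0 + M)); auto).
  destruct (compact_closed_gap _ Z HSk HZ) as [eps [Heps Hgap]].
  { intros p [_ Sp]. apply HSAZ; auto. }
  set (N := fun p => exists s, S s /\ near eps s p).
  assert (HNo : open2 N) by (apply open_ex; intros s; apply open_guarded_ball).
  assert (HSN : forall p, S p -> N p) by (intros p Sp; exists p; split; auto; apply near_refl; auto).
  assert (HclN : forall p, closure2 N p -> exists s, S s /\ near (2 * eps) s p).
  { intros p Hp. destruct (Hp eps Heps) as [q [[s [Ss Nq]] Npq]]. exists s. split; auto.
    replace (2 * eps) with (eps + eps) by ring. eapply near_trans; [exact Nq|].
    apply near_sym; auto. }
  set (a := fst s0 - M - 2 * eps). set (b := fst s0 + M + 2 * eps).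
  assert (HclNb : forall p, closure2 N p -> a <= fst p <= b).
  { intros p Hp. destruct (HclN p Hp) as [s [Ss Ns]]. specialize (HSb s Ss).
    unfold a, b. near_lra. }
  set (X := fun p => A p /\ closure2 N p).
  assert (HXc : closed2 X) by (apply closed_and; auto; apply closure_closed).
  assert (HXk : compact2 X) by (apply (compact_bounded_piece A _ a b); auto; apply closure_closed).
  destruct (shura_bura X S HXc HXk HSconn) with (F := fun p => X p /\ ~ N p)
    as [U [V [[HU [HV [Hc [Hd HSU]]]] HFV]]].
  - intros p Sp. split; [apply HSAZ; auto|apply closure_incl; auto].
  - intros D H1 H2 H3. apply HSmax; auto. intros p Dp. destruct (H2 p Dp) as [Ap Np].
    split; auto. destruct (HclN p Np) as [s [Ss Ns]]. apply (Hgap s); auto. split; auto.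
    apply HSAZ; auto.
  - apply closed_diff_open; auto.
  - intros p [Xp _]; auto.
  - intros p [_ Np] Sp. apply Np, HSN; auto.
  - exists (fun p => U p /\ N p), a, b.
    split; [apply open_and; auto|]. split; [|split; [|split]].
    + apply (separated_part_closed A N U V); auto.
    + intros p _ [_ Np]. apply HclNb, closure_incl; auto.
    + intros p Sp. split; auto.
    + intros p Ap [_ [s [Ss Ns]]]. apply (Hgap s p); [split; [apply HSAZ|]; auto|].
      eapply near_mono; [|exact Ns]. lra.
Qed.

(* Hence a component of A minus an invariant closed set Z meeting A cannot be
   closed and horizontally bounded: the translates of its clopen neighbourhood
   would cover A, including a point of Z. *)
Lemma bounded_component_impossible A Z S :
  invariant A -> compactA A -> connectedA A -> closed2 A ->
  invariant Z -> closed2 Z -> (exists a, A a /\ Z a) ->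
  (exists s, S s) -> closed2 S -> connected_wrt open2 S -> h_finite S ->
  (forall p, S p -> A p /\ ~ Z p) ->
  (forall D, (forall p, S p -> D p) -> (forall p, D p -> A p /\ ~ Z p) ->
     connected_wrt open2 D -> forall p, D p -> S p) -> False.
Proof.
  intros HAi HAc HAconn HAcl HZi HZ [z [Az Zz]] HSne HScl HSconn Hh HSAZ HSmax.
  destruct (bounded_clopen_nbhd A Z S) as [O [a [b [HO [HK [Hb [HSO HOZ]]]]]]]; auto.
  destruct HSne as [s0 Ss0].
  destruct (bounded_clopen_piece_saturates A O a b HAi HAconn HO HK Hb) with (p := z)
    as [j [Aj Oj]]; auto.
  - exists s0. split; [apply HSAZ|apply HSO]; auto.
  - apply (HOZ (shift j z)); auto. apply invariant_shift; auto.
Qed.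

Lemma spike_reaches A Up Um W S :
  invariant A -> compactA A -> connectedA A -> closed2 A ->
  componentA W (complement A) -> (exists w, W w) ->
  (forall p, CAhat Up Um p -> closure2 W p) ->
  spike A Up Um S -> closed2 S -> h_finite S -> exists p, S p /\ closure2 W p.
Proof.
  intros HAi HAc HAconn HAcl HW [w Ww] HCW [HSne [HSsub [HSconn HSmax]]] HScl Hh.
  apply NNPP; intro Hn.
  destruct HSne as [s0 Ss0].
  apply (bounded_component_impossible A (closure2 W) S); eauto.
  - apply closure_invariant, HW.
  - apply closure_closed.
  - apply component_closure_meets; eauto. exists s0. apply HSsub; auto.
  - intros p Sp. split; [apply HSsub; auto|]. intro. eauto.
  - intros D H1 H2 H3. apply HSmax; auto. intros p Dp.
    destruct (H2 p Dp) as [Ap HnW]. split; auto.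
Qed.

Theorem mainTheorem15 (A Up Um S : pset) :
  essential_annular A Up Um -> thin A ->
  spike A Up Um S -> h_finite S ->
  exists p, closure2 S p /\ CAhat Up Um p.
Proof.
  intros [[HAi [_ [HAc HAconn]]] [HUp [HUm [_ [Hall [Hua Hub]]]]]] Hthin Hspike Hh.
  apply NNPP; intro Hn.
  assert (HAcl : closed2 A) by (apply compactA_closed; auto).
  assert (HSA : forall p, S p -> A p) by (intros p Sp; apply (proj1 (proj2 Hspike) p Sp)).
  assert (HScl : closed2 S).
  { apply (component_closed S _ Hspike). intros p Hp. split.
    - apply HAcl. eapply closure_mono; [|exact Hp]. auto.
    - intro HC. apply Hn. eauto. }
  assert (HtoUp : exists p, S p /\ closure2 Up p).
  { destruct (Hua 0) as [w [Ww _]].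
    apply (spike_reaches A Up Um Up S); eauto. intros p [H _]; auto. }
  assert (HtoUm : exists p, S p /\ closure2 Um p).
  { destruct (Hub 0) as [w [Ww _]].
    apply (spike_reaches A Up Um Um S); eauto. intros p [_ H]; auto. }
  destruct Hspike as [_ [HSsub [HSconn _]]].
  apply (connected_closed_split S (closure2 Up) (closure2 Um) HSconn); auto using closure_closed.
  - intros p Sp. apply (thin_in_closures A Up Um); auto.
  - intros p Sp HUp' HUm'. apply (HSsub p Sp). split; auto.
Qed.
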